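(* Let $\bm X\in\mathbb{IR}^n$ and let $(g^{\rm u},g^{\rm o})_{\bm X}$ be a superposition relaxation of $g:\bm X\to\mathbb{R}$ on $\bm X$ with continuous summands $g^{\rm u}_i,g^{\rm o}_i:X_i\to\mathbb{R}$. Let $\mathcal P^{\rm u}=\{i:\operatorname{wid}(g^{\rm u}_i(X_i))>0\}$ and $\mathcal P^{\rm o}=\{i:\operatorname{wid}(g^{\rm o}_i(X_i))>0\}$, and assume both are nonempty. Let $\varphi:Z\to\mathbb{R}$ be defined on an interval $Z\supseteq[\underline g^{\rm u}(\bm X),\overline g^{\rm o}(\bm X)]$, convex and monotonic. Set $\theta^{\rm u}_i=\operatorname{wid}(g^{\rm u}_i(X_i))/\operatorname{wid}(g^{\rm u}(\bm X))$ and $\theta^{\rm o}_i=\operatorname{wid}(g^{\rm o}_i(X_i))/\operatorname{wid}(g^{\rm o}(\bm X))$. Then a superposition relaxation $(f^{\rm u},f^{\rm o})_{\bm X}$ of $f=\varphi\circ g$ on $\bm X$ is given by the following summands (all summands not listed being identically zero): • if $\varphi$ is nondecreasing: $f^{\rm u}_i(x_i)=\varphi\big(g^{\rm u}_i(x_i)-\underline g^{\rm u}_i(X_i)+\underline g^{\rm u}(\bm X)\big)-(1-\theta^{\rm u}_i)\varphi\big(\underline g^{\rm u}(\bm X)\big)$ for $i\in\mathcal P^{\rm u}$, and $f^{\rm o}_i(x_i)=\theta^{\rm o}_i\varphi\Big(\frac{g^{\rm o}_i(x_i)-\overline g^{\rm o}_i(X_i)}{\theta^{\rm o}_i}+\overline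 g^{\rm o}(\bm X)\Big)$ for $i\in\mathcal P^{\rm o}$; • if $\varphi$ is nonincreasing: $f^{\rm u}_i(x_i)=\varphi\big(g^{\rm o}_i(x_i)-\overline g^{\rm o}_i(X_i)+\overline g^{\rm o}(\bm X)\big)-(1-\theta^{\rm o}_i)\varphi\big(\overline g^{\rm o}(\bm X)\big)$ for $i\in\mathcal P^{\rm o}$, and $f^{\rm o}_i(x_i)=\theta^{\rm u}_i\varphi\Big(\frac{g^{\rm u}_i(x_i)-\underline g^{\rm u}_i(X_i)}{\theta^{\rm u}_i}+\underline g^{\rm u}(\bm X)\Big)$ for $i\in\mathcal P^{\rm u}$.
   Context: $\mathbb{IR}^n$ is the set of boxes $\bm X=X_1\times\cdots\times X_n$ of compact intervals $X_i$. A superposition relaxation of $g:\bm X\to\mathbb{R}$ on $\bm X$, written $(g^{\rm u},g^{\rm o})_{\bm X}$, is a pair of separable functions $g^{\rm u}(\bm x)=\sum_i g^{\rm u}_i(x_i)$, $g^{\rm o}(\bm x)=\sum_i g^{\rm o}_i(x_i)$ with $g^{\rm u}_i,g^{\rm o}_i:X_i\to\mathbb{R}$ and $g^{\rm u}\le g\le g^{\rm o}$ on $\bm X$. Notation: $\underline g^{\rm u}_i(X_i)=\min_{x_i\in X_i}g^{\rm u}_i(x_i)$, $\overline g^{\rm u}_i(X_i)=\max_{x_i\in X_i}g^{\rm u}_i(x_i)$, $\operatorname{wid}(g^{\rm u}_i(X_i))=\overline g^{\rm u}_i(X_i)-\underline g^{\rm u}_i(X_i)$ (similarly for $g^{\rm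 o}_i$); $\underline g^{\rm u}(\bm X)=\sum_i\underline g^{\rm u}_i(X_i)$, $\overline g^{\rm u}(\bm X)=\sum_i\overline g^{\rm u}_i(X_i)$, $\operatorname{wid}(g^{\rm u}(\bm X))=\overline g^{\rm u}(\bm X)-\underline g^{\rm u}(\bm X)$, and likewise for $g^{\rm o}$. *)

From HB Require Import structures.
From mathcomp Require Import all_boot all_order all_algebra.
From mathcomp Require Import all_classical all_reals all_analysis.
Set Implicit Arguments. Unset Strict Implicit. Unset Printing Implicit Defensive.
Import Order.TTheory GRing.Theory Num.Theory numFieldNormedType.Exports.
Local Open Scope classical_set_scope.
Local Open Scope ring_scope.

Section Defs.
Variables (R : realType) (n : nat).

Definition in_box (a b : 'I_n -> R) (x : 'I_n -> R) : Prop :=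
  forall i, a i <= x i <= b i.

(* minimum / maximum of h over the compact interval [lo, hi]
   (for continuous h these are attained, so inf = min and sup = max) *)
Definition fmin (h : R -> R) (lo hi : R) : R := inf (h @` `[lo, hi]).
Definition fmax (h : R -> R) (lo hi : R) : R := sup (h @` `[lo, hi]).
Definition fwid (h : R -> R) (lo hi : R) : R := fmax h lo hi - fmin h lo hi.

(* separable sums:  underline h(X), overline h(X), wid(h(X)) *)
Definition smin (a b : 'I_n -> R) (h : 'I_n -> R -> R) : R :=
  \sum_(i < n) fmin (h i) (a i) (b i).
Definition smax (a b : 'I_n -> R) (h : 'I_n -> R -> R) : R :=
  \sum_(i < n) fmax (h i) (a i) (b i).
Definition swid (a b : 'I_n -> R) (h : 'I_n -> R -> R) : R :=
  smax a b h - smin a b h.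

Definition superposition_relaxation (a b : 'I_n -> R)
    (f : ('I_n -> R) -> R) (hu ho : 'I_n -> R -> R) : Prop :=
  forall x, in_box a b x ->
    \sum_(i < n) hu i (x i) <= f x /\ f x <= \sum_(i < n) ho i (x i).

End Defs.

Definition convex_on (R : realType) (Z : set R) (phi : R -> R) : Prop :=
  forall x y t, Z x -> Z y -> 0 <= t <= 1 ->
    phi (t * x + (1 - t) * y) <= t * phi x + (1 - t) * phi y.

From HB Require Import structures.
From mathcomp Require Import all_boot all_order all_algebra.
From mathcomp Require Import all_classical all_reals all_analysis.
From mathcomp Require Import ring lra.
Set Implicit Arguments. Unset Strict Implicit. Unset Printing Implicit Defensive.
Import Order.TTheory GRing.Theory Num.Theory numFieldNormedType.Exports.
Local Open Scope classical_set_scope.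
Local Open Scope ring_scope.

(* For nondecreasing phi, phi (g x) lies between phi (sum_i gu_i x_i) and
   phi (sum_i go_i x_i).  Below, write sum_i gu_i x_i = L + sum_i e_i with
   L = smin gu and displacements e_i = gu_i x_i - min gu_i >= 0: for convex phi
   the chord inequality makes z |-> phi (L + z) - phi L superadditive along
   such same-sign displacements, and the constant phi L is redistributed with
   the weights theta_i summing to 1.  Above, sum_i go_i x_i = U + sum_i d_i is
   the convex combination sum_i theta_i (d_i / theta_i + U), so Jensen's
   inequality applies.  For nonincreasing phi the roles of gu and go swap and
   each bound is anchored at the opposite end of the range. *)

Lemma is_interval_convex_comb (R : realType) (Z : set R) x y t :
  is_interval Z -> Z x -> Z y -> 0 <= t <= 1 -> Z (t * x + (1 - t) * y).
Proof.
move=> iZ Zx Zy /andP[t0 t1].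
wlog xy : x y t Zx Zy t0 t1 / x <= y.
  move=> wlog_xy; case: (leP x y) => [|/ltW yx]; first exact: wlog_xy.
  have -> : t * x + (1 - t) * y = (1 - t) * y + (1 - (1 - t)) * x by ring.
  by apply: wlog_xy => //; lra.
have h1 : 0 <= (1 - t) * (y - x) by apply: mulr_ge0; lra.
have h2 : 0 <= t * (y - x) by apply: mulr_ge0; lra.
by apply: (iZ x y) => //; apply/andP; split; lra.
Qed.

Lemma big_weighted_eq0 (R : realType) (I : eqType) (s : seq I) (w f : I -> R) :
  (forall i, 0 <= w i) -> \sum_(i <- s) w i = 0 -> \sum_(i <- s) w i * f i = 0.
Proof.
move=> w0 /eqP; rewrite psumr_eq0 // => /allP w_s0.
by rewrite big_seq big1 // => i /w_s0 /eqP ->; rewrite mul0r.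
Qed.

Lemma jensen (R : realType) (Z : set R) (phi : R -> R) (I : eqType) (s : seq I)
    (w p : I -> R) :
  is_interval Z -> convex_on Z phi ->
  (forall i, 0 <= w i) -> (forall i, Z (p i)) -> 0 < \sum_(i <- s) w i ->
  Z ((\sum_(i <- s) w i * p i) / \sum_(i <- s) w i) /\
  phi ((\sum_(i <- s) w i * p i) / \sum_(i <- s) w i)
    <= (\sum_(i <- s) w i * phi (p i)) / \sum_(i <- s) w i.
Proof.
move=> iZ cZ w0 Zp; elim: s => [|x s IH]; first by rewrite big_nil ltxx.
rewrite !big_cons.
set c := \sum_(i <- s) w i; set A := \sum_(i <- s) w i * p i.
set B := \sum_(i <- s) w i * phi (p i) => wc_gt0.
have c_ge0 : 0 <= c by apply: sumr_ge0.
have [c0|c_neq0] := eqVneq c 0.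
  rewrite /A /B c0 !(big_weighted_eq0 _ w0 c0) !addr0 in wc_gt0 *.
  by rewrite ![w x * _]mulrC !mulfK ?gt_eqF //; split.
have c_gt0 : 0 < c by rewrite lt_def c_neq0.
have [Zq phi_q] := IH c_gt0.
set q := A / c in Zq phi_q.
set t := w x / (w x + c).
have wc_neq0 : w x + c != 0 by rewrite gt_eqF.
have t01 : 0 <= t <= 1.
  by rewrite divr_ge0 ?addr_ge0 //= ler_pdivrMr // mul1r lerDl.
have -> : (w x * p x + A) / (w x + c) = t * p x + (1 - t) * q.
  by rewrite /t /q; field; apply/andP.
have -> : (w x * phi (p x) + B) / (w x + c) =
          t * phi (p x) + (1 - t) * (B / c).
  by rewrite /t; field; apply/andP.
split; first exact: is_interval_convex_comb.
apply: le_trans (cZ _ _ _ (Zp x) Zq t01) _.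
by rewrite lerD2l ler_wpM2l // subr_ge0; case/andP: t01.
Qed.

Lemma same_sign_frac (R : realType) (I : finType) (e : I -> R) j :
  (forall i, 0 <= e i) \/ (forall i, e i <= 0) ->
  0 <= e j / \sum_i e i <= 1 /\ e j = e j / (\sum_i e i) * \sum_i e i.
Proof.
suff nonneg (f : I -> R) : (forall i, 0 <= f i) ->
    0 <= f j / \sum_i f i <= 1 /\ f j = f j / (\sum_i f i) * \sum_i f i.
  case=> [/nonneg//|e_le0].
  have [i|] := nonneg (fun i => - e i); first by rewrite oppr_ge0.
  rewrite sumrN invrN !mulrNN mulrN => t01 /eqP.
  by rewrite eqr_opp => /eqP.
move=> f_ge0; have F_ge0 : 0 <= \sum_i f i by apply: sumr_ge0.
have [F0|F_neq0] := eqVneq (\sum_i f i) 0.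
  have fj0 : f j = 0 by apply: (psumr_eq0P (fun i _ => f_ge0 i) F0).
  by rewrite F0 fj0 !mul0r lexx ler01.
have F_gt0 : 0 < \sum_i f i by rewrite lt_def F_neq0.
rewrite divr_ge0 //= ler_pdivrMr // mul1r mulfVK //.
by rewrite (bigD1 j) //= lerDl sumr_ge0.
Qed.

Lemma convex_superadditive (R : realType) (I : finType) (Z : set R)
    (phi : R -> R) (e : I -> R) (L : R) :
  convex_on Z phi -> Z L -> Z (\sum_i e i + L) ->
  (forall i, 0 <= e i) \/ (forall i, e i <= 0) ->
  \sum_i (phi (e i + L) - phi L) <= phi (\sum_i e i + L) - phi L.
Proof.
set E := \sum_i e i; move=> cZ ZL ZM e_sign.
have chord i : phi (e i + L) - phi L <= e i / E * (phi (E + L) - phi L).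
  have [t01 e_t] := same_sign_frac i e_sign; rewrite -/E in t01 e_t.
  have -> : e i + L = e i / E * (E + L) + (1 - e i / E) * L.
    by rewrite {1}e_t; ring.
  have := cZ _ _ _ ZM ZL t01; lra.
apply: le_trans (ler_sum _ (fun i _ => chord i)) _.
rewrite -mulr_suml -mulr_suml.
have [E0|E_neq0] := eqVneq E 0; first by rewrite E0 add0r subrr !mulr0.
by rewrite divff // mul1r.
Qed.

Lemma convex_lower_relaxation (R : realType) (I : finType) (Z : set R)
    (phi : R -> R) (P : pred I) (th e : I -> R) (L : R) :
  convex_on Z phi -> Z L -> Z (\sum_i e i + L) ->
  (forall i, 0 <= e i) \/ (forall i, e i <= 0) ->
  (forall i, ~~ P i -> th i = 0) -> (forall i, th i = 0 -> e i = 0) ->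
  \sum_i th i = 1 ->
  \sum_i (if P i then phi (e i + L) - (1 - th i) * phi L else 0)
    <= phi (\sum_i e i + L).
Proof.
move=> cZ ZL ZM e_sign thP e_th th1.
have -> : \sum_i (if P i then phi (e i + L) - (1 - th i) * phi L else 0) =
          \sum_i (phi (e i + L) - phi L) + \sum_i th i * phi L.
  rewrite -big_split; apply: eq_bigr => i _ /=.
  case: ifPn => [_|/thP th0]; first by ring.
  by rewrite th0 e_th // add0r mul0r subrr addr0.
rewrite -mulr_suml th1 mul1r -lerBrDr.
exact: (convex_superadditive cZ ZL ZM e_sign).
Qed.

Lemma convex_upper_relaxation (R : realType) (I : finType) (Z : set R)
    (phi : R -> R) (P : pred I) (th d : I -> R) (C : R) :
  is_interval Z -> convex_on Z phi -> (forall i, 0 <= th i) ->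
  (forall i, ~~ P i -> th i = 0) -> (forall i, th i = 0 -> d i = 0) ->
  \sum_i th i = 1 -> (forall i, Z (d i / th i + C)) ->
  phi (\sum_i d i + C) <= \sum_i (if P i then th i * phi (d i / th i + C) else 0).
Proof.
move=> iZ cZ th_ge0 thP d_th th1 Zp.
have -> : \sum_i (if P i then th i * phi (d i / th i + C) else 0) =
          \sum_i th i * phi (d i / th i + C).
  by apply: eq_bigr => i _; case: ifPn => // /thP ->; rewrite mul0r.
have thd i : th i * (d i / th i) = d i.
  have [th0|th_neq0] := eqVneq (th i) 0; first by rewrite th0 d_th // mul0r.
  by rewrite mulrC mulfVK.
have -> : \sum_i d i + C = \sum_i th i * (d i / th i + C).
  under [RHS]eq_bigr do rewrite mulrDr thd.
  by rewrite big_split /= -mulr_suml th1 mul1r.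
have th_gt0 : 0 < \sum_i th i by rewrite th1 ltr01.
by have [_] := jensen iZ cZ th_ge0 Zp th_gt0; rewrite th1 !divr1.
Qed.

Lemma sup_eq_max (R : realType) (E : set R) x : E x -> ubound E x -> sup E = x.
Proof.
move=> Ex ubx; apply/le_anti.
by rewrite ge_sup ?(ub_le_sup _ Ex) //; exists x.
Qed.

Lemma inf_eq_min (R : realType) (E : set R) x : E x -> lbound E x -> inf E = x.
Proof.
move=> Ex lbx; apply/le_anti.
by rewrite lb_le_inf ?(ge_inf _ Ex) //; exists x.
Qed.

Section ExtremaOnInterval.
Variables (R : realType) (h : R -> R) (lo hi : R).
Hypotheses (lo_hi : lo <= hi) (h_cont : {within `[lo, hi], continuous h}).

Lemma fmax_is_max : (forall t, lo <= t <= hi -> h t <= fmax h lo hi) /\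
  exists2 c, lo <= c <= hi & h c = fmax h lo hi.
Proof.
have [c c_in c_max] := EVT_max lo_hi h_cont.
have -> : fmax h lo hi = h c.
  apply: sup_eq_max => [|_ [t t_in <-]]; first by exists c.
  by apply: c_max; rewrite inE.
split=> [t t_in|]; last by exists c; rewrite // -(@in_itv _ _ _ `[lo, hi]).
by apply: c_max; rewrite in_itv.
Qed.

Lemma fmin_is_min : (forall t, lo <= t <= hi -> fmin h lo hi <= h t) /\
  exists2 c, lo <= c <= hi & h c = fmin h lo hi.
Proof.
have [c c_in c_min] := EVT_min lo_hi h_cont.
have -> : fmin h lo hi = h c.
  apply: inf_eq_min => [|_ [t t_in <-]]; first by exists c.
  by apply: c_min; rewrite inE.
split=> [t t_in|]; last by exists c; rewrite // -(@in_itv _ _ _ `[lo, hi]).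
by apply: c_min; rewrite in_itv.
Qed.

End ExtremaOnInterval.

Section SeparableSum.
Variables (R : realType) (n : nat) (a b : 'I_n -> R) (h : 'I_n -> R -> R).
Hypothesis ab : forall i, a i <= b i.
Hypothesis h_cont : forall i, {within `[a i, b i], continuous (h i)}.

Lemma sep_bounds x i : in_box a b x ->
  fmin (h i) (a i) (b i) <= h i (x i) <= fmax (h i) (a i) (b i).
Proof.
move=> /(_ i) x_i.
have [le_fmax _] := fmax_is_max (ab i) (@h_cont i).
have [fmin_le _] := fmin_is_min (ab i) (@h_cont i).
by rewrite fmin_le ?le_fmax.
Qed.

Lemma in_box_lower : in_box a b a.
Proof. by move=> i; rewrite lexx ab. Qed.

Lemma fwid_ge0 i : 0 <= fwid (h i) (a i) (b i).
Proof.
have /andP[lo hi] := sep_bounds i in_box_lower.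
by rewrite subr_ge0 (le_trans lo hi).
Qed.

Lemma sum_sep_bounds x : in_box a b x ->
  smin a b h <= \sum_i h i (x i) <= smax a b h.
Proof.
by move=> x_in; rewrite !ler_sum // => i _; have /andP[] := sep_bounds i x_in.
Qed.

Lemma smin_le_smax : smin a b h <= smax a b h.
Proof. by have /andP[lo hi] := sum_sep_bounds in_box_lower; apply: le_trans hi. Qed.

Lemma swidE : swid a b h = \sum_i fwid (h i) (a i) (b i).
Proof. by rewrite /swid /smax /smin -sumrB. Qed.

Lemma smax_attained : exists2 x, in_box a b x & \sum_i h i (x i) = smax a b h.
Proof.
have /choice [x x_max] : forall i, exists c,
    a i <= c <= b i /\ h i c = fmax (h i) (a i) (b i).
  by move=> i; have [_ [c c_in c_max]] := fmax_is_max (ab i) (@h_cont i); exists c.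
by exists x => [i|]; [exact: (x_max i).1 | apply: eq_bigr => i _; exact: (x_max i).2].
Qed.

Lemma smin_attained : exists2 x, in_box a b x & \sum_i h i (x i) = smin a b h.
Proof.
have /choice [x x_min] : forall i, exists c,
    a i <= c <= b i /\ h i c = fmin (h i) (a i) (b i).
  by move=> i; have [_ [c c_in c_min]] := fmin_is_min (ab i) (@h_cont i); exists c.
by exists x => [i|]; [exact: (x_min i).1 | apply: eq_bigr => i _; exact: (x_min i).2].
Qed.

Definition weight i := fwid (h i) (a i) (b i) / swid a b h.

Hypothesis h_var : exists i, 0 < fwid (h i) (a i) (b i).

Lemma swid_gt0 : 0 < swid a b h.
Proof.
have [i wid_i] := h_var; rewrite swidE (bigD1 i) //=.
by rewrite ltr_pwDl ?sumr_ge0 // => j _; exact: fwid_ge0.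
Qed.

Lemma weight_ge0 i : 0 <= weight i.
Proof. by rewrite divr_ge0 ?fwid_ge0 ?ltW ?swid_gt0. Qed.

Lemma sum_weight : \sum_i weight i = 1.
Proof. by rewrite -mulr_suml -swidE divff // gt_eqF ?swid_gt0. Qed.

Lemma weightK i : weight i * swid a b h = fwid (h i) (a i) (b i).
Proof. by rewrite mulfVK // gt_eqF ?swid_gt0. Qed.

Lemma weight_eq0 i : ~~ (0 < fwid (h i) (a i) (b i)) -> weight i = 0.
Proof.
rewrite -leNgt => wid_le0.
by rewrite /weight (@le_anti _ _ (fwid _ _ _) 0) ?wid_le0 ?fwid_ge0 ?mul0r.
Qed.

Lemma weight_eq0_const x i : in_box a b x -> weight i = 0 ->
  h i (x i) = fmin (h i) (a i) (b i) /\ h i (x i) = fmax (h i) (a i) (b i).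
Proof.
move=> x_in w0; have /andP[lo hi] := sep_bounds i x_in.
have wid0 : fmax (h i) (a i) (b i) = fmin (h i) (a i) (b i).
  by apply/eqP; rewrite -subr_eq0 -/(fwid _ _ _) -weightK w0 mul0r.
by split; apply/le_anti; [rewrite lo -wid0 hi | rewrite hi wid0 lo].
Qed.

Variables (Z : set R) (phi : R -> R).
Hypotheses (iZ : is_interval Z) (cZ : convex_on Z phi).
Hypothesis range_Z : `[smin a b h, smax a b h] `<=` Z.

Lemma mem_range z : smin a b h <= z <= smax a b h -> Z z.
Proof. by move=> z_in; apply: range_Z; rewrite /= in_itv. Qed.

Lemma mem_range_scaled_max x i : in_box a b x ->
  Z ((h i (x i) - fmax (h i) (a i) (b i)) / weight i + smax a b h).
Proof.
move=> x_in; apply: mem_range.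
have [w0|w_neq0] := eqVneq (weight i) 0.
  by rewrite w0 invr0 mulr0 add0r lexx smin_le_smax.
have w_gt0 : 0 < weight i by rewrite lt_def w_neq0 weight_ge0.
have /andP[lo hi] := sep_bounds i x_in.
have d_le0 : (h i (x i) - fmax (h i) (a i) (b i)) / weight i <= 0.
  by rewrite pmulr_lle0 ?invr_gt0 // subr_le0.
have d_ge : - swid a b h <= (h i (x i) - fmax (h i) (a i) (b i)) / weight i.
  by rewrite ler_pdivlMr // mulNr mulrC weightK /fwid; lra.
by rewrite /swid in d_ge; apply/andP; split; lra.
Qed.

Lemma mem_range_scaled_min x i : in_box a b x ->
  Z ((h i (x i) - fmin (h i) (a i) (b i)) / weight i + smin a b h).
Proof.
move=> x_in; apply: mem_range.
have [w0|w_neq0] := eqVneq (weight i) 0.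
  by rewrite w0 invr0 mulr0 add0r lexx smin_le_smax.
have w_gt0 : 0 < weight i by rewrite lt_def w_neq0 weight_ge0.
have /andP[lo hi] := sep_bounds i x_in.
have d_ge0 : 0 <= (h i (x i) - fmin (h i) (a i) (b i)) / weight i.
  by rewrite divr_ge0 ?subr_ge0 // ltW.
have d_le : (h i (x i) - fmin (h i) (a i) (b i)) / weight i <= swid a b h.
  by rewrite ler_pdivrMr // mulrC weightK /fwid; lra.
by rewrite /swid in d_le; apply/andP; split; lra.
Qed.

Lemma convex_sep_lb_min x : in_box a b x ->
  \sum_i (if 0 < fwid (h i) (a i) (b i) then
            phi (h i (x i) - fmin (h i) (a i) (b i) + smin a b h)
            - (1 - weight i) * phi (smin a b h)
          else 0) <= phi (\sum_i h i (x i)).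
Proof.
move=> x_in; have /andP[sum_lo sum_hi] := sum_sep_bounds x_in.
have -> : \sum_i h i (x i) =
          \sum_i (h i (x i) - fmin (h i) (a i) (b i)) + smin a b h.
  by rewrite sumrB subrK.
apply: (convex_lower_relaxation cZ _ _ _ weight_eq0 _ sum_weight).
- by apply: mem_range; rewrite lexx smin_le_smax.
- by rewrite sumrB subrK; apply: mem_range; rewrite sum_lo sum_hi.
- by left=> i; rewrite subr_ge0; have /andP[] := sep_bounds i x_in.
- by move=> i /(weight_eq0_const x_in) [-> _]; rewrite subrr.
Qed.

Lemma convex_sep_lb_max x : in_box a b x ->
  \sum_i (if 0 < fwid (h i) (a i) (b i) then
            phi (h i (x i) - fmax (h i) (a i) (b i) + smax a b h)
            - (1 - weight i) * phi (smax a b h)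
          else 0) <= phi (\sum_i h i (x i)).
Proof.
move=> x_in; have /andP[sum_lo sum_hi] := sum_sep_bounds x_in.
have -> : \sum_i h i (x i) =
          \sum_i (h i (x i) - fmax (h i) (a i) (b i)) + smax a b h.
  by rewrite sumrB subrK.
apply: (convex_lower_relaxation cZ _ _ _ weight_eq0 _ sum_weight).
- by apply: mem_range; rewrite lexx smin_le_smax.
- by rewrite sumrB subrK; apply: mem_range; rewrite sum_lo sum_hi.
- by right=> i; rewrite subr_le0; have /andP[] := sep_bounds i x_in.
- by move=> i /(weight_eq0_const x_in) [_ ->]; rewrite subrr.
Qed.

Lemma convex_sep_ub_max x : in_box a b x ->
  phi (\sum_i h i (x i)) <=
  \sum_i (if 0 < fwid (h i) (a i) (b i) then
            weight i * phi ((h i (x i) - fmax (h i) (a i) (b i)) / weight i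
                            + smax a b h)
          else 0).
Proof.
move=> x_in.
have -> : \sum_i h i (x i) =
          \sum_i (h i (x i) - fmax (h i) (a i) (b i)) + smax a b h.
  by rewrite sumrB subrK.
apply: (convex_upper_relaxation iZ cZ weight_ge0 weight_eq0 _ sum_weight).
- by move=> i /(weight_eq0_const x_in) [_ ->]; rewrite subrr.
- by move=> i; exact: mem_range_scaled_max.
Qed.

Lemma convex_sep_ub_min x : in_box a b x ->
  phi (\sum_i h i (x i)) <=
  \sum_i (if 0 < fwid (h i) (a i) (b i) then
            weight i * phi ((h i (x i) - fmin (h i) (a i) (b i)) / weight i
                            + smin a b h)
          else 0).
Proof.
move=> x_in.
have -> : \sum_i h i (x i) =
          \sum_i (h i (x i) - fmin (h i) (a i) (b i)) + smin a b h.
  by rewrite sumrB subrK.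
apply: (convex_upper_relaxation iZ cZ weight_ge0 weight_eq0 _ sum_weight).
- by move=> i /(weight_eq0_const x_in) [-> _]; rewrite subrr.
- by move=> i; exact: mem_range_scaled_min.
Qed.

End SeparableSum.

Section RelaxationRange.
Variables (R : realType) (n : nat) (a b : 'I_n -> R).
Variables (g : ('I_n -> R) -> R) (gu go : 'I_n -> R -> R).
Hypotheses (ab : forall i, a i <= b i) (rel : superposition_relaxation a b g gu go).
Hypothesis gu_cont : forall i, {within `[a i, b i], continuous (gu i)}.
Hypothesis go_cont : forall i, {within `[a i, b i], continuous (go i)}.

Lemma relaxation_smax_le : smax a b gu <= smax a b go.
Proof.
have [x x_in <-] := smax_attained ab gu_cont.
have [/le_trans lo_g g_hi] := rel x_in; apply/lo_g/(le_trans g_hi).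
by have /andP[] := sum_sep_bounds ab go_cont x_in.
Qed.

Lemma relaxation_smin_le : smin a b gu <= smin a b go.
Proof.
have [x x_in <-] := smin_attained ab go_cont.
have [lo_g g_hi] := rel x_in; apply: le_trans (le_trans lo_g g_hi).
by have /andP[] := sum_sep_bounds ab gu_cont x_in.
Qed.

End RelaxationRange.

Theorem theorem1 (R : realType) (n : nat) (a b : 'I_n -> R)
  (g : ('I_n -> R) -> R) (gu go : 'I_n -> R -> R)
  (Z : set R) (phi : R -> R) :
  (forall i, a i <= b i) ->
  superposition_relaxation a b g gu go ->
  (forall i, {within (`[a i, b i] : set R), continuous (gu i : R -> R)}) ->
  (forall i, {within (`[a i, b i] : set R), continuous (go i : R -> R)}) ->
  (exists i, 0 < fwid (gu i) (a i) (b i)) ->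
  (exists i, 0 < fwid (go i) (a i) (b i)) ->
  is_interval Z ->
  `[smin a b gu, smax a b go] `<=` Z ->
  convex_on Z phi ->
  let thu i := fwid (gu i) (a i) (b i) / swid a b gu in
  let tho i := fwid (go i) (a i) (b i) / swid a b go in
  ({in Z &, forall x y, x <= y -> phi x <= phi y} ->
    superposition_relaxation a b (fun x => phi (g x))
      (fun i xi => if 0 < fwid (gu i) (a i) (b i) then
          phi (gu i xi - fmin (gu i) (a i) (b i) + smin a b gu)
          - (1 - thu i) * phi (smin a b gu)
        else 0)
      (fun i xi => if 0 < fwid (go i) (a i) (b i) then
          tho i * phi ((go i xi - fmax (go i) (a i) (b i)) / tho i
                       + smax a b go)
        else 0))
  /\
  ({in Z &, forall x y, x <= y -> phi y <= phi x} ->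
    superposition_relaxation a b (fun x => phi (g x))
      (fun i xi => if 0 < fwid (go i) (a i) (b i) then
          phi (go i xi - fmax (go i) (a i) (b i) + smax a b go)
          - (1 - tho i) * phi (smax a b go)
        else 0)
      (fun i xi => if 0 < fwid (gu i) (a i) (b i) then
          thu i * phi ((gu i xi - fmin (gu i) (a i) (b i)) / thu i
                       + smin a b gu)
        else 0)).
Proof.
move=> ab rel gu_cont go_cont gu_var go_var iZ range_Z cZ thu tho.
have Z_gu : `[smin a b gu, smax a b gu] `<=` Z.
  apply: subset_trans range_Z; apply: subset_itv; rewrite bnd_simp ?lexx //.
  exact: (relaxation_smax_le ab rel gu_cont go_cont).
have Z_go : `[smin a b go, smax a b go] `<=` Z.
  apply: subset_trans range_Z; apply: subset_itv; rewrite bnd_simp ?lexx //.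
  exact: (relaxation_smin_le ab rel gu_cont go_cont).
have sandwich x : in_box a b x ->
    [/\ Z (\sum_i gu i (x i)), Z (g x), Z (\sum_i go i (x i)),
        \sum_i gu i (x i) <= g x & g x <= \sum_i go i (x i)].
  move=> x_in; have [lo_g g_hi] := rel x x_in.
  have /andP[gu_lo gu_hi] := sum_sep_bounds ab gu_cont x_in.
  have /andP[go_lo go_hi] := sum_sep_bounds ab go_cont x_in.
  split=> //; [apply: Z_gu | apply: range_Z | apply: Z_go];
    by rewrite /= in_itv /= ?gu_lo ?gu_hi ?go_lo ?go_hi ?(le_trans gu_lo lo_g)
                            ?(le_trans g_hi go_hi).
split=> mono x /[dup] x_in /sandwich [Zu Zg Zo lo_g g_hi] /=; split.
- exact: le_trans (convex_sep_lb_min ab gu_cont gu_var cZ Z_gu x_in)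
                  (mono _ _ (mem_set Zu) (mem_set Zg) lo_g).
- exact: le_trans (mono _ _ (mem_set Zg) (mem_set Zo) g_hi)
                  (convex_sep_ub_max ab go_cont go_var iZ cZ Z_go x_in).
- exact: le_trans (convex_sep_lb_max ab go_cont go_var cZ Z_go x_in)
                  (mono _ _ (mem_set Zg) (mem_set Zo) g_hi).
- exact: le_trans (mono _ _ (mem_set Zu) (mem_set Zg) lo_g)
                  (convex_sep_ub_min ab gu_cont gu_var iZ cZ Z_gu x_in).
Qed.
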